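(* Let $p,q$ be primes and $c,d\in\mathbb N$. In the algebra $(\mathbb N,\cdot,\mathbb N)$, $$p:q::_m c:d\iff (p=q\text{ and }c=d)\ \text{or}\ (p\neq q\text{ and }c=pu\text{ and }d=qu\text{ for some }u\in\mathbb N).$$
   Context: $(\mathbb N,\cdot,\mathbb N)$ is the algebra with universe the natural numbers $\mathbb N$, multiplication, and every natural number as a constant. A justification is a pair of terms $s\to t$ with the variables of $t$ among those of $s$; monolinear justifications are those where $s,t$ contain only one fixed variable $x$, occurring at most once in $s$ and at most once in $t$. $\uparrow^m(a\to b)$ is the set of monolinear justifications $s\to t$ with $a=s(\mathbf o)$, $b=t(\mathbf o)$ for some value $\mathbf o$; $\uparrow^m(a\to b:\!\cdot\,c\to d):=\uparrow^m(a\to b)\cap\uparrow^m(c\to d)$. A monolinear justification is trivial if it lies in all sets $\uparrow^m(a'\to b':\!\cdot\,c'\to d')$. $a\to b:\!\cdot_m\,c\to d$ holds iff either (i) all justifications in $\uparrow^m(a\to b)\cup\uparrow^m(c\to d)$ are trivial, or (ii) $J_d:=\uparrow^m(a\to b:\!\cdot\,c\to d)$ contains a non-trivial justification and for every $d'$, $J_d\subseteq J_{d'}$ implies $J_{d'}$ contains a non-trivial justification and $J_{d'}\subseteq J_d$ (ignoring trivial justifications). $a:b::_m c:d$ iff $a\to b:\!\cdot_m\,c\to d$, $b\to a:\!\cdot_m\,d\to c$, $c\to d:\!\cdot_m\,a\to b$, $d\to c:\!\cdot_m\,b\to a$ all hold. *)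

From mathcomp Require Import all_boot.
Set Implicit Arguments. Unset Strict Implicit. Unset Printing Implicit Defensive.

(* Terms of the algebra (N, ., N) in the single fixed variable x:
   the variable x, a constant for every natural number, and products. *)
Inductive term : Type :=
| TVar : term
| TCst : nat -> term
| TMul : term -> term -> term.

Fixpoint occ (t : term) : nat :=
  match t with
  | TVar => 1
  | TCst _ => 0
  | TMul u v => occ u + occ v
  end.

Fixpoint eval (t : term) (o : nat) : nat :=
  match t with
  | TVar => o
  | TCst n => n
  | TMul u v => eval u o * eval v o
  end.

(* a justification s -> t, represented as the pair (s, t) *)
Definition justification := (term * term)%type.

(* monolinear: x occurs at most once in s and at most once in t,
   and the variables of t are among those of s *)
Definition monolinear (j : justification) : Prop :=
  occ j.1 <= 1 /\ occ j.2 <= 1 /\ (0 < occ j.2 -> 0 < occ j.1).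

Definition up (a b : nat) (j : justification) : Prop :=
  monolinear j /\ exists o, eval j.1 o = a /\ eval j.2 o = b.

Definition up2 (a b c d : nat) (j : justification) : Prop :=
  up a b j /\ up c d j.

Definition trivial (j : justification) : Prop :=
  monolinear j /\ forall a' b' c' d', up2 a' b' c' d' j.

Definition subset_nt (A B : justification -> Prop) : Prop :=
  forall j, A j -> ~ trivial j -> B j.

Definition has_nontrivial (A : justification -> Prop) : Prop :=
  exists j, A j /\ ~ trivial j.

Definition arrow_prop (a b c d : nat) : Prop :=
  (forall j, (up a b j \/ up c d j) -> trivial j)
  \/
  (has_nontrivial (up2 a b c d) /\
   forall d', subset_nt (up2 a b c d) (up2 a b c d') ->
              has_nontrivial (up2 a b c d') /\
              subset_nt (up2 a b c d') (up2 a b c d)).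

Definition analogy (a b c d : nat) : Prop :=
  arrow_prop a b c d /\ arrow_prop b a d c /\
  arrow_prop c d a b /\ arrow_prop d c b a.

From mathcomp Require Import all_boot.

Set Implicit Arguments.
Unset Strict Implicit.

(* A term in one variable evaluates to [k * o ^ n], where [n] counts the
   occurrences of x; so a monolinear justification either has a constant
   target or has the shape [k x -> l x].  Hence no justification is trivial,
   and each arrow of an analogy [p : q :: c : d] is witnessed by a common
   justification of [p -> q] and [c -> d].  For primes, [k o = p] and
   [l o = q] force [o = 1] (so [c = p u], [d = q u]) or [k = l = 1] (so
   [p = q], [c = d]), unless the target is the constant [q = d]; the mirrored
   arrow [q -> p :. d -> c] rules out the last case unless also [c = p].
   Conversely [a x -> b x] witnesses all four arrows of
   [a v : b v :: a u : b u], because it determines the [d'] of any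
   competing justification set. *)

Fixpoint coef (t : term) : nat :=
  match t with
  | TVar => 1
  | TCst n => n
  | TMul u v => coef u * coef v
  end.

Lemma eval_coef t o : eval t o = coef t * o ^ occ t.
Proof.
elim: t => [|n|u IHu v IHv] /=; first by rewrite mul1n expn1.
  by rewrite expn0 muln1.
by rewrite IHu IHv expnD mulnACA.
Qed.

Variant monolinear_spec (j : justification) : Prop :=
  | MonolinearConst of (forall o, eval j.2 o = coef j.2)
  | MonolinearLinear of (forall o, eval j.1 o = coef j.1 * o)
                      & (forall o, eval j.2 o = coef j.2 * o).

Lemma monolinearP j : monolinear j -> monolinear_spec j.
Proof.
case: j => s t [/= os [ot st]].
have Es o := eval_coef s o; have Et o := eval_coef t o.
case: (occ t) ot st Et => [|[|//]] _ st Et.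
  by constructor 1 => o; rewrite /= Et muln1.
case: (occ s) os st Es => [|[|//]] _ st Es; first by have := st isT.
by constructor 2 => o; rewrite /= ?Es ?Et expn1.
Qed.

Lemma not_trivial j : ~ trivial j.
Proof.
(* Fitting [1 -> 0] forces [o = 1] and a zero target, which cannot fit [1 -> 1]. *)
case=> mj /(_ 1 0 1 1) [[_ [o [Es1 Et0]]] [_ [o' [_ Et1]]]].
case/monolinearP: mj Es1 Et0 Et1 => [Et | Es Et]; first by rewrite !Et => _ ->.
rewrite Es !Et => /eqP; rewrite muln_eq1 => /andP [_ /eqP ->].
by rewrite muln1 => ->.
Qed.

Lemma arrow_prop_up2 a b c d : arrow_prop a b c d -> exists j, up2 a b c d j.
Proof.
case=> [triv | [[j [Jj _]] _]]; last by exists j.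
have Jab : up a b (TCst a, TCst b) by split; [|exists 0].
by case: (not_trivial (triv _ (or_introl Jab))).
Qed.

Lemma arrow_prop_scaled a b u v :
  0 < a -> arrow_prop (a * v) (b * v) (a * u) (b * u).
Proof.
move=> a_gt0; right.
pose j : justification := (TMul (TCst a) TVar, TMul (TCst b) TVar).
have Jj : up2 (a * v) (b * v) (a * u) (b * u) j.
  by split; split=> //; [exists v | exists u].
have nt : has_nontrivial (up2 (a * v) (b * v) (a * u) (b * u)).
  by exists j; split=> //; apply: not_trivial.
split=> // d' sub.
have [_ [_ [o /= [/eqP Eo <-]]]] := sub j Jj (@not_trivial j).
by move: Eo; rewrite eqn_pmul2l // => /eqP ->; split=> // j'.
Qed.

Lemma analogy_scaled a b u v :
  0 < a -> 0 < b -> analogy (a * v) (b * v) (a * u) (b * u).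
Proof.
by move=> a_gt0 b_gt0; split; [|split; [|split]]; apply: arrow_prop_scaled.
Qed.

Lemma prime_common_factor p q k l o :
  prime p -> prime q -> k * o = p -> l * o = q -> o = 1 \/ (k = 1 /\ l = 1).
Proof.
move=> pp pq Ep Eq; have [->|o_ne1] := eqVneq o 1; [by left | right].
have /(prime_nt_dvdP pp o_ne1) op : o %| p by rewrite -Ep dvdn_mull.
have /(prime_nt_dvdP pq o_ne1) oq : o %| q by rewrite -Eq dvdn_mull.
have o_gt0 : 0 < o by rewrite op prime_gt0.
by split; apply/eqP; rewrite -(eqn_pmul2r o_gt0) mul1n; [rewrite Ep op | rewrite Eq oq].
Qed.

Lemma up2_primes p q c d j : prime p -> prime q -> up2 p q c d j ->
  [\/ p = q /\ c = d, exists u, c = p * u /\ d = q * u | d = q].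
Proof.
move=> pp pq [[mj [o [Ep Eq]]] [_ [u [Ec Ed]]]].
case/monolinearP: mj Ep Eq Ec Ed => [Et | Es Et].
  by rewrite !Et => _ -> _ <-; constructor 3.
rewrite !Es !Et => Ep Eq <- <-.
have [o1 | [k1 l1]] := prime_common_factor pp pq Ep Eq.
  by constructor 2; exists u; rewrite -Ep -Eq o1 !muln1.
by constructor 1; rewrite -Ep -Eq k1 l1.
Qed.

Lemma analogy_primes p q c d : prime p -> prime q -> analogy p q c d ->
  (p = q /\ c = d) \/ exists u, c = p * u /\ d = q * u.
Proof.
move=> pp pq [/arrow_prop_up2 [j J] [/arrow_prop_up2 [j' J'] _]].
case: (up2_primes pp pq J) => [|cd|dq]; [by left | by right |].
case: (up2_primes pq pp J') => [[-> ->]|[u [-> ->]]|cp]; [by left | by right; exists u |].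
by right; exists 1; rewrite !muln1.
Qed.

Theorem mainTheorem11 (p q c d : nat) (hp : prime p) (hq : prime q) :
  analogy p q c d <->
  ((p = q /\ c = d) \/ (p <> q /\ exists u : nat, c = p * u /\ d = q * u)).
Proof.
split=> [/(analogy_primes hp hq) [|[u [-> ->]]] | [[<- ->] | [_ [u [-> ->]]]]].
- by left.
- by case: (eqVneq p q) => [<- | /eqP pq]; [left | right; split; last exists u].
- by have := analogy_scaled d p (ltn0Sn 0) (ltn0Sn 0); rewrite !mul1n.
- by have := analogy_scaled u 1 (prime_gt0 hp) (prime_gt0 hq); rewrite !muln1.
Qed.
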